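(* Let $k,\ell\ge0$, $\pi_1\in\mathcal{T}_k$, $\pi_2\in\mathcal{T}_\ell$, where $\mathcal{T}_0=\{\epsilon\}$. Let $\pi=C_1(\pi_1,\pi_2)=\pi_1\cdot(k+\ell+1)\cdot\pi_2^{+k}$. Then $\pi\in\mathcal{T}_{k+\ell+1}$, and $\operatorname{slmax}(\pi)=\operatorname{slmax}(\pi_1)+\operatorname{slmax}(\pi_2)+1$.
   Context: For a finite sequence $A$ of distinct integers, the stack-sorting operator $\mathcal{S}$ is defined by $\mathcal{S}(\epsilon)=\epsilon$ for the empty sequence and, if $A$ is non-empty with largest element $m$, writing $A=A_L\cdot(m)\cdot A_R$ (concatenation), $\mathcal{S}(A)=\mathcal{S}(A_L)\cdot\mathcal{S}(A_R)\cdot(m)$. For $n\ge1$, $\mathcal{T}_n$ is the set of permutations $\sigma\in\mathfrak{S}_n$ (viewed as sequences) with $\mathcal{S}(\mathcal{S}(\sigma))$ equal to the identity (two-stack sortable permutations). For a sequence $\tau$, $\tau^{+k}$ is obtained by adding $k$ to each element. For a permutation $\sigma$, $\operatorname{slmax}(\sigma)$ is the number of left-to-right maxima of $\mathcal{S}(\sigma)$ (indices $i$ such that $\mathcal{S}(\sigma)(i)>\mathcal{S}(\sigma)(j)$ for all $j<i$), with $\operatorname{slmax}(\epsilon)=0$. *)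

From mathcomp Require Import all_boot.
Set Implicit Arguments. Unset Strict Implicit. Unset Printing Implicit Defensive.

(* Sequences of distinct integers are modelled as seq nat (all values used are
   positive naturals, as permutations of [1..n] and their shifts). *)

Fixpoint stack_sort_fuel (fuel : nat) (A : seq nat) : seq nat :=
  match fuel with
  | 0 => [::]
  | f.+1 =>
    match A with
    | [::] => [::]
    | _ =>
      let m := foldr maxn 0 A in
      let i := index m A in
      stack_sort_fuel f (take i A) ++ stack_sort_fuel f (drop i.+1 A) ++ [:: m]
    end
  end.

Definition stack_sort (A : seq nat) : seq nat := stack_sort_fuel (size A) A.

Definition is_perm (n : nat) (s : seq nat) : bool := perm_eq s (iota 1 n).

Definition two_stack_sortable (n : nat) (s : seq nat) : bool :=
  is_perm n s && (stack_sort (stack_sort s) == iota 1 n).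

Definition shift (k : nat) (t : seq nat) : seq nat := map (fun x => x + k) t.

Definition lrmax (s : seq nat) : nat :=
  count (fun i => all (fun j => nth 0 s j < nth 0 s i) (iota 0 i)) (iota 0 (size s)).

Definition slmax (s : seq nat) : nat := lrmax (stack_sort s).

Definition C1 (k l : nat) (p1 p2 : seq nat) : seq nat :=
  p1 ++ (k + l + 1) :: shift k p2.

From mathcomp Require Import all_boot zify.

Set Implicit Arguments.
Unset Strict Implicit.
Unset Printing Implicit Defensive.

(* Write σ ⊕ τ for σ · τ^{+k} when σ ∈ S_k, so that C_1(π1, π2) = π1 · n · π2^{+k}
   with n = k + l + 1.  Stack sorting satisfies S(L · m · R) = S(L) · S(R) · m
   when m is the maximum, and it commutes with shifts and with concatenations
   A · B in which every entry of A is below every entry of B.  Hence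
   S(π) = (S(π1) ⊕ S(π2)) · n and S(S(π)) = (S(S(π1)) ⊕ S(S(π2))) · n = id.
   Left-to-right maxima add up over such block concatenations and are
   shift invariant, and the final n is one more maximum. *)

Lemma foldr_maxn_ub (s : seq nat) : all (fun x => x <= foldr maxn 0 s) s.
Proof. by rewrite foldrE; apply/allP => x xs; apply: leq_bigmax_seq. Qed.

Lemma foldr_maxn_mem (s : seq nat) : s != [::] -> foldr maxn 0 s \in s.
Proof.
elim: s => [|x [|y s] IH] //= _; first by rewrite maxn0 mem_head.
rewrite in_cons /maxn; case: ltnP => _; last by rewrite eqxx.
by rewrite IH ?orbT.
Qed.

Lemma foldr_maxn_split (L R : seq nat) m :
  all (fun x => x < m) L -> all (fun x => x <= m) R ->
  foldr maxn 0 (L ++ m :: R) = m.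
Proof.
move=> ltL leR; apply/eqP; rewrite eqn_leq; apply/andP; split.
  rewrite foldrE; apply/bigmax_leqP_seq => x + _.
  by rewrite mem_cat in_cons => /or3P [/(allP ltL)/ltnW | /eqP-> | /(allP leR)].
by apply: (allP (foldr_maxn_ub _)); rewrite mem_cat mem_head orbT.
Qed.

Lemma index_max_lt (s : seq nat) : s != [::] -> index (foldr maxn 0 s) s < size s.
Proof. by move=> /foldr_maxn_mem; rewrite index_mem. Qed.

Lemma stack_sort_fuel_eq f g A : size A <= f -> size A <= g ->
  stack_sort_fuel f A = stack_sort_fuel g A.
Proof.
elim: f g A => [|f IH] [|g] [|x A] //= leAf leAg.
have := @index_max_lt (x :: A) isT.
set s := x :: A; set i := index _ s => lt_i.
rewrite (IH g (take i s)) ?(IH g (drop i.+1 s)) //;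
  rewrite ?size_take_min ?size_drop /s /= in lt_i *; lia.
Qed.

Lemma stack_sortE A : A != [::] ->
  stack_sort A = stack_sort (take (index (foldr maxn 0 A) A) A) ++
                 stack_sort (drop (index (foldr maxn 0 A) A).+1 A) ++ [:: foldr maxn 0 A].
Proof.
case: A => [|x A] // nzA; have := index_max_lt nzA.
set s := x :: A; set i := index _ s => lt_i.
have -> : stack_sort s = stack_sort_fuel (size A) (take i s) ++
    stack_sort_fuel (size A) (drop i.+1 s) ++ [:: foldr maxn 0 s] by [].
rewrite /stack_sort -!(@stack_sort_fuel_eq (size A)) //;
  rewrite ?size_take_min ?size_drop /s /= in lt_i *; lia.
Qed.

Lemma stack_sort_split L m R :
  all (fun x => x < m) L -> all (fun x => x <= m) R ->
  stack_sort (L ++ m :: R) = stack_sort L ++ stack_sort R ++ [:: m].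
Proof.
move=> ltL leR; rewrite stack_sortE; last by case: L {ltL}.
have m_notin_L : m \notin L by apply/negP => /(allP ltL); rewrite ltnn.
rewrite foldr_maxn_split // index_cat (negbTE m_notin_L) /= eqxx addn0.
by rewrite take_size_cat // drop_cat ltnNge leqnSn subSnn /= drop0.
Qed.

Lemma stack_sort_ind (P : seq nat -> Prop) :
  P [::] ->
  (forall L m R, all (fun x => x < m) L -> all (fun x => x <= m) R ->
     P L -> P R -> P (L ++ m :: R)) ->
  forall A, P A.
Proof.
move=> P0 Psplit A; elim: {A}(size A) {-2}A (leqnn (size A)) => [|n IH] A.
  by rewrite leqn0 size_eq0 => /eqP->.
have [-> //|nzA leAn] := eqVneq A [::].
have := index_max_lt nzA; set m := foldr maxn 0 A; set i := index m A => lt_i.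
have eA : A = take i A ++ m :: drop i.+1 A.
  by rewrite -[LHS](cat_take_drop i) (drop_nth m lt_i) nth_index ?foldr_maxn_mem.
have le_m : all (fun x => x <= m) A := foldr_maxn_ub A.
rewrite eA; apply: Psplit; last 2 first.
- by apply: IH; rewrite size_take_min; lia.
- by apply: IH; rewrite size_drop; lia.
- apply/allP => x x_take; rewrite ltn_neqAle (allP le_m _ (mem_take x_take)) andbT.
  by apply: contraTneq x_take => ->; rewrite in_take_leq ?ltnn // ltnW.
- by apply/allP => x /mem_drop; apply: (allP le_m).
Qed.

Lemma perm_stack_sort A : perm_eq (stack_sort A) A.
Proof.
elim/stack_sort_ind: A => // L m R ltL leR permL permR.
by rewrite stack_sort_split // perm_cat // cats1 perm_rcons perm_cons.
Qed.

Lemma stack_sort_shift k A : stack_sort (shift k A) = shift k (stack_sort A).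
Proof.
elim/stack_sort_ind: A => // L m R ltL leR shiftL shiftR.
rewrite stack_sort_split // /shift map_cat /= stack_sort_split -/(shift k _).
- by rewrite shiftL shiftR !map_cat.
- by rewrite all_map; apply: sub_all ltL => x /=; rewrite ltn_add2r.
- by rewrite all_map; apply: sub_all leR => x /=; rewrite leq_add2r.
Qed.

Lemma stack_sort_cat A B :
  allrel ltn A B -> stack_sort (A ++ B) = stack_sort A ++ stack_sort B.
Proof.
elim/stack_sort_ind: B A => [|L m R ltL leR sortL _] A; first by rewrite !cats0.
rewrite allrel_catr allrel_consr => /and3P [ltAL ltAm _].
by rewrite catA !stack_sort_split ?all_cat ?ltAm ?sortL ?catA.
Qed.

Lemma stack_sort_rcons_max s m :
  all (fun x => x < m) s -> stack_sort (rcons s m) = rcons (stack_sort s) m.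
Proof. by move=> lts; rewrite -!cats1 stack_sort_split. Qed.

Lemma lrmax_rcons s x : lrmax (rcons s x) = lrmax s + all (fun y => y < x) s.
Proof.
rewrite /lrmax size_rcons -addn1 iotaD count_cat /= addn0; congr (_ + nat_of_bool _).
  apply: eq_in_count => i; rewrite mem_iota => /andP [_ lt_i].
  apply: eq_in_all => j; rewrite mem_iota => /andP [_ lt_j].
  by rewrite !nth_rcons lt_i (ltn_trans lt_j lt_i).
rewrite nth_rcons ltnn eqxx -[in RHS](mkseq_nth 0 s) all_map.
rewrite add0n; apply: eq_in_all => j; rewrite mem_iota => /andP [_ lt_j].
by rewrite /= nth_rcons lt_j.
Qed.

Lemma lrmax_cat A B : allrel ltn A B -> lrmax (A ++ B) = lrmax A + lrmax B.
Proof.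
elim/last_ind: B => [|B x IH]; first by rewrite cats0 addn0.
rewrite -cats1 allrel_catr allrel1r cats1 => /andP [ltAB ltAx].
by rewrite -rcons_cat !lrmax_rcons IH // all_cat ltAx addnA.
Qed.

Lemma lrmax_shift k s : lrmax (shift k s) = lrmax s.
Proof.
elim/last_ind: s => [|s x IH] //.
rewrite /shift map_rcons !lrmax_rcons -/(shift k s) IH all_map.
by congr (_ + nat_of_bool _); apply: eq_all => y /=; rewrite ltn_add2r.
Qed.

Lemma mem_is_perm n s x : is_perm n s -> (x \in s) = (0 < x <= n).
Proof. by move=> sP; rewrite (perm_mem sP) mem_iota add1n ltnS. Qed.

Lemma is_perm_stack_sort n s : is_perm n s -> is_perm n (stack_sort s).
Proof. exact: perm_trans (perm_stack_sort s). Qed.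

Lemma is_perm_ltn n s : is_perm n s -> all (fun x => x < n + 1) s.
Proof.
by move=> sP; apply/allP => x; rewrite (mem_is_perm _ sP) addn1 ltnS => /andP [].
Qed.

Lemma shift_iota k m l : shift k (iota m l) = iota (m + k) l.
Proof. by rewrite addnC iotaDl; apply: eq_map => x; rewrite addnC. Qed.

Lemma iota_direct_sum k l : iota 1 k ++ shift k (iota 1 l) = iota 1 (k + l).
Proof. by rewrite shift_iota iotaD. Qed.

Lemma iota_rcons n : rcons (iota 1 n) (n + 1) = iota 1 (n + 1).
Proof. by rewrite iotaD /= -cats1 add1n addn1. Qed.

Lemma is_perm_direct_sum k l p1 p2 :
  is_perm k p1 -> is_perm l p2 -> is_perm (k + l) (p1 ++ shift k p2).
Proof. by move=> p1P p2P; rewrite /is_perm -iota_direct_sum perm_cat // perm_map. Qed.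

Lemma is_perm_rcons n s : is_perm n s -> is_perm (n + 1) (rcons s (n + 1)).
Proof. by move=> sP; rewrite /is_perm -iota_rcons -!cats1 perm_cat2r. Qed.

Lemma allrel_ltn_shift k l p1 p2 :
  is_perm k p1 -> is_perm l p2 -> allrel ltn p1 (shift k p2).
Proof.
move=> p1P p2P; rewrite allrel_mapr; apply/allrelP => x y.
by rewrite (mem_is_perm _ p1P) (mem_is_perm _ p2P) => /andP [_ le_xk] /andP [gt_y0 _]; lia.
Qed.

Lemma perm_C1 k l p1 p2 :
  perm_eql (C1 k l p1 p2) (rcons (p1 ++ shift k p2) (k + l + 1)).
Proof. by apply/permPl; rewrite /C1 rcons_cat perm_cat2l perm_sym perm_rcons. Qed.

Lemma stack_sort_C1 k l p1 p2 :
  all (fun x => x < k + l + 1) (p1 ++ shift k p2) ->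
  stack_sort (C1 k l p1 p2) =
  rcons (stack_sort p1 ++ shift k (stack_sort p2)) (k + l + 1).
Proof.
rewrite all_cat => /andP [lt1 lt2].
rewrite /C1 stack_sort_split ?stack_sort_shift -?cats1 ?catA //.
by apply: sub_all lt2 => x /ltnW.
Qed.

Theorem proposition5 (k l : nat) (pi1 pi2 : seq nat) :
  two_stack_sortable k pi1 -> two_stack_sortable l pi2 ->
  two_stack_sortable (k + l + 1) (C1 k l pi1 pi2) /\
  slmax (C1 k l pi1 pi2) = slmax pi1 + slmax pi2 + 1.
Proof.
move=> /andP [p1P /eqP sort1] /andP [p2P /eqP sort2].
have Sp1P := is_perm_stack_sort p1P; have Sp2P := is_perm_stack_sort p2P.
have sortC1 := stack_sort_C1 (is_perm_ltn (is_perm_direct_sum p1P p2P)).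
have lt_sorted := is_perm_ltn (is_perm_direct_sum Sp1P Sp2P).
split.
  apply/andP; split; first by rewrite /is_perm perm_C1; apply/is_perm_rcons/is_perm_direct_sum.
  rewrite sortC1 stack_sort_rcons_max // stack_sort_cat ?(allrel_ltn_shift Sp1P Sp2P) //.
  by rewrite stack_sort_shift sort1 sort2 iota_direct_sum iota_rcons.
rewrite /slmax sortC1 lrmax_rcons lt_sorted lrmax_cat ?lrmax_shift //.
exact: allrel_ltn_shift Sp1P Sp2P.
Qed.
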